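(* For any single-elimination tournament $\mathcal{T}$, any scoring system $\sigma$, and any bracket $\widehat{B}$ of $\mathcal{T}$, the set $\{\widehat{B}_a:a\in P(\mathcal{T})\}$ is a $\sigma$-resolving set.
   Context: A single-elimination tournament is a finite directed graph $\mathcal{T}$ such that: (a) $\mathcal{T}$ has exactly one sink (vertex with no out-neighbours); (b) every non-sink vertex has exactly one out-neighbour; (c) $\mathcal{T}$ has no directed cycles; (d) $|N^-(v)|\ne 1$ for every vertex $v$, where $N^-(v)$ denotes the set of in-neighbours of $v$. The players $P(\mathcal{T})$ are the sources and the matches are $M(\mathcal{T})=V(\mathcal{T})\setminus P(\mathcal{T})$. For a vertex $u$, $P(u)$ is the set of players $c$ for which there is a directed walk from $c$ to $u$ (length $0$ allowed). A bracket is a function $B:V(\mathcal{T})\to P(\mathcal{T})$ with $B(c)=c$ for every player $c$ and $B(x)\in\{B(u):u\in N^-(x)\}$ for every match $x$. For a bracket $\widehat{B}$ and player $a$, $\widehat{B}_a$ is the bracket with $\widehat{B}_a(u)=a$ if $a\in P(u)$ and $\widehat{B}_a(u)=\widehat{B}(u)$ otherwise. A scoring system is any function $\sigma:M(\mathcal{T})\to\mathbb{R}_{>0}$, and $\mathrm{score}_\sigma(B,B')=\sum_{x\in M(\mathcal{T}):\,B(x)=B'(x)}\sigma(x)$. A set of brackets $\mathcal{B}$ is $\sigma$-resolving if for every pair of distinct brackets $B\ne B'$ there is $B_i\in\mathcal{B}$ with $\mathrm{score}_\sigma(B_i,B)\ne\mathrm{score}_\sigma(B_i,B')$. *)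

From HB Require Import structures.
From mathcomp Require Import all_boot all_order all_algebra.
From mathcomp Require Import reals.
Set Implicit Arguments. Unset Strict Implicit. Unset Printing Implicit Defensive.
Import Order.TTheory GRing.Theory Num.Theory.

Section SET.
Variables (V : finType) (e : rel V).

Definition out_nbrs (v : V) : {set V} := [set w | e v w].
Definition in_nbrs (v : V) : {set V} := [set u | e u v].

Definition is_sink (v : V) : bool := out_nbrs v == set0.

Definition acyclic_rel : Prop := forall u v, e u v -> ~~ connect e v u.

Definition is_SET : Prop :=
  [/\ #|[set v | is_sink v]| = 1%N,
      (forall v, ~~ is_sink v -> #|out_nbrs v| = 1%N),
      acyclic_rel &
      (forall v, #|in_nbrs v| != 1%N)].

Definition is_player (v : V) : bool := in_nbrs v == set0.
Definition is_match (v : V) : bool := ~~ is_player v.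

Definition players_of (u : V) : {set V} := [set c | is_player c & connect e c u].

Definition is_bracket (B : {ffun V -> V}) : Prop :=
  (forall v, is_player (B v)) /\
  (forall c, is_player c -> B c = c) /\
  (forall x, is_match x -> exists2 u, e u x & B x = B u).

Definition bracket_at (Bh : {ffun V -> V}) (a : V) : {ffun V -> V} :=
  [ffun u => if a \in players_of u then a else Bh u].

Definition score (R : realType) (sigma : V -> R) (B B' : {ffun V -> V}) : R :=
  (\sum_(x | is_match x && (B x == B' x)) sigma x)%R.

Definition resolving (R : realType) (sigma : V -> R) (S : {set {ffun V -> V}}) : Prop :=
  forall B B', is_bracket B -> is_bracket B' -> B != B' ->
    exists2 Bi, Bi \in S & score sigma Bi B != score sigma Bi B'.

End SET.

From HB Require Import structures.
From mathcomp Require Import all_boot all_order all_algebra.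
From mathcomp Require Import reals.
From mathcomp Require Import lra.
Import Order.TTheory GRing.Theory Num.Theory.

(* Let B and B' differ, and let x be a vertex where they differ all of whose
   strict predecessors they agree on; x is a match, won by b := B x in B and
   by b' := B' x in B'.  Compare the brackets Bh_b and Bh_b'.  At a match
   below x both B and B' agree, at a match incomparable with x both Bh_b and
   Bh_b' agree with Bh, and at a match z on the path from x to the sink Bh_b
   predicts b, which is not B' z, and Bh_b' predicts b', which is not B z.
   Hence

     (score Bh_b B - score Bh_b B') - (score Bh_b' B - score Bh_b' B')

   is a sum of nonnegative terms whose term at x is 2 sigma x > 0, so one of
   Bh_b, Bh_b' tells B and B' apart. *)

Set Implicit Arguments.
Unset Strict Implicit.

Lemma connect_first_edge (T : finType) (r : rel T) x z :
  connect r x z -> x != z -> exists2 y, r x y & connect r y z.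
Proof.
move=> /connectP[[|y p]] /=; first by move=> _ ->; rewrite eqxx.
by move=> /andP[rxy pth] -> _; exists y => //; apply/connectP; exists p.
Qed.

Lemma connect_last_edge (T : finType) (r : rel T) x z :
  connect r x z -> x != z -> exists2 y, r y z & connect r x y.
Proof.
move=> rxz nxz; have rzx : connect [rel a b | r b a] z x by rewrite connect_rev.
have [|y ryz] := connect_first_edge rzx; first by rewrite eq_sym.
by rewrite connect_rev; exists y.
Qed.

Section Reachability.
Variables (V : finType) (e : rel V).

Lemma out_nbrs_functional :
  (forall v, ~~ is_sink e v -> #|out_nbrs e v| = 1%N) ->
  forall u v w, e u v -> e u w -> v = w.
Proof.
move=> out1 u v w euv euw.
have /out1/eqP/cards1P[y out_u] : ~~ is_sink e u.
  by apply/set0Pn; exists v; rewrite inE.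
have : v \in out_nbrs e u by rewrite inE.
have : w \in out_nbrs e u by rewrite inE.
by rewrite out_u !inE => /eqP -> /eqP ->.
Qed.

Hypothesis e_functional : forall u v w, e u v -> e u w -> v = w.
Hypothesis e_acyclic : acyclic_rel e.

Lemma connect_comparable b x y :
  connect e b x -> connect e b y -> connect e x y \/ connect e y x.
Proof.
move=> /connectP[p]; elim: p b => [|c p IHp] b /=; first by move=> _ -> ->; left.
move=> /andP[ebc pth] xE by'; have [<-|nby] := eqVneq b y.
  by right; apply/connectP; exists (c :: p) => //=; rewrite ebc.
have [w ebw cwy] := connect_first_edge by' nby.
by rewrite (e_functional ebw ebc) in cwy; apply: IHp pth xE cwy.
Qed.

Lemma in_nbrs_connect_uniq b u v z :
  e u z -> e v z -> connect e b u -> connect e b v -> u = v.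
Proof.
wlog uv : u v / connect e u v.
  move=> wlog euz evz bu bv; case: (connect_comparable bu bv) => [uv|vu].
    exact: wlog.
  by apply/esym/(wlog v u).
move=> euz evz _ _; apply/eqP/negPn/negP => nuv.
have [w euw wv] := connect_first_edge uv nuv.
by rewrite (e_functional euw euz) in wv; move: (e_acyclic evz); rewrite wv.
Qed.

Definition ancestors (v : V) : {set V} := [set w | connect e w v].

Lemma card_ancestors_lt w x : connect e w x -> w != x ->
  (#|ancestors w| < #|ancestors x|)%N.
Proof.
move=> wx nwx; have [u eux wu] := connect_last_edge wx nwx.
apply: proper_card; apply/properP; split.
  apply/subsetP => y; rewrite !inE => yw.
  exact: connect_trans (connect_trans yw wu) (connect1 eux).
exists x; rewrite !inE ?connect0 //.
by apply: contra (e_acyclic eux) => xw; apply: connect_trans xw wu.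
Qed.

Lemma acyclic_ind (P : V -> Prop) :
  (forall v, (forall u, e u v -> P u) -> P v) -> forall v, P v.
Proof.
move=> IH v; move: {2}#|ancestors v|.+1 (ltnSn #|ancestors v|) => n.
elim: n v => // n IHn v; rewrite ltnS => le_vn; apply: IH => u euv.
apply: IHn; apply: leq_trans le_vn.
apply: card_ancestors_lt (connect1 euv) _.
by apply: contraNneq (e_acyclic euv) => ->.
Qed.

Lemma exists_minimal_disagreement (T : eqType) (f g : {ffun V -> T}) :
  f != g ->
  exists2 x, f x != g x & forall w, connect e w x -> w != x -> f w = g w.
Proof.
move=> nfg; have [x0 fgx0] : exists x, f x != g x.
  apply/existsP; apply: contraNT nfg => /existsPn fg.
  by apply/eqP/ffunP => v; apply/eqP/negPn.
have [x fgx x_min] :=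
  @arg_minnP _ x0 (fun y => f y != g y) (fun y => #|ancestors y|) fgx0.
exists x => // w wx nwx; apply/eqP/negPn/negP => /x_min.
by rewrite leqNgt card_ancestors_lt.
Qed.

Section Bracket.
Variable B : {ffun V -> V}.
Hypothesis B_bracket : is_bracket e B.

Lemma bracket_winner_connect v : connect e (B v) v.
Proof.
have [_ [B_player B_match]] := B_bracket; elim/acyclic_ind: v => v IHv.
have [pv|mv] := boolP (is_player e v); first by rewrite B_player ?connect0.
have [u euv ->] := B_match v mv.
exact: connect_trans (IHv u euv) (connect1 euv).
Qed.

Lemma bracket_winner_along x z :
  connect e x z -> connect e (B z) x -> B x = B z.
Proof.
have [_ [_ B_match]] := B_bracket; elim/acyclic_ind: z x => z IHz x xz Bzx.
have [-> //|nxz] := eqVneq x z.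
have [v evz xv] := connect_last_edge xz nxz.
have [|u euz Bzu] := B_match z; first by apply/set0Pn; exists v; rewrite inE.
rewrite Bzu in Bzx *.
have uv :=
  in_nbrs_connect_uniq euz evz (bracket_winner_connect u) (connect_trans Bzx xv).
by rewrite -uv in xv; apply: IHz.
Qed.

End Bracket.

Lemma bracket_atE Bh a z :
  bracket_at e Bh a z = if is_player e a && connect e a z then a else Bh z.
Proof. by rewrite ffunE inE. Qed.

Local Open Scope ring_scope.

Section Score.
Variables (R : realType) (sigma : V -> R) (B B' : {ffun V -> V}).

Let gain (Bi : {ffun V -> V}) z : R := (Bi z == B z)%:R - (Bi z == B' z)%:R.

Lemma score_subE Bi :
  score e sigma Bi B - score e sigma Bi B' =
  \sum_(z | is_match e z) gain Bi z * sigma z.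
Proof.
rewrite /score !big_mkcondr -sumrB; apply: eq_bigr => z _.
rewrite /gain; do 2!case: (_ == _); rewrite /=; lra.
Qed.

Hypotheses (B_bracket : is_bracket e B) (B'_bracket : is_bracket e B').
Variables (Bh : {ffun V -> V}) (x : V).
Hypothesis Bx_neq : B x != B' x.
Hypothesis B_below : forall w, connect e w x -> w != x -> B w = B' w.

Let b := B x.
Let b' := B' x.

Lemma gain_winner_brackets_ge0 z :
  0 <= gain (bracket_at e Bh b) z - gain (bracket_at e Bh b') z.
Proof.
have [pb cbx] := (B_bracket.1 x, bracket_winner_connect B_bracket x).
have [pb' cb'x] := (B'_bracket.1 x, bracket_winner_connect B'_bracket x).
rewrite /gain !bracket_atE pb pb' /=.
have [xz|nxz] := boolP (connect e x z).
  rewrite (connect_trans cbx xz) (connect_trans cb'x xz).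
  have b_B' : (b == B' z) = false.
    apply: contraNF Bx_neq => /eqP bE.
    by rewrite (bracket_winner_along B'_bracket xz) -bE.
  have b'_B : (b' == B z) = false.
    apply: contraNF Bx_neq => /eqP bE.
    by rewrite (bracket_winner_along B_bracket xz) -bE.
  by rewrite b_B' b'_B; do 2!case: (_ == _); rewrite /=; lra.
have [zx|nzx] := boolP (connect e z x).
  rewrite (B_below zx); last by apply: contraNneq nxz => ->.
  by rewrite !subrr.
have off c : connect e c x -> ~~ connect e c z.
  by move=> cx; apply/negP => /(connect_comparable cx)[]; apply/negP.
by rewrite (negbTE (off _ cbx)) (negbTE (off _ cb'x)) subrr.
Qed.

Hypothesis sigma_pos : forall z, is_match e z -> 0 < sigma z.

Lemma winner_brackets_score_gap :
  0 < (score e sigma (bracket_at e Bh b) B - score e sigma (bracket_at e Bh b) B')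
    - (score e sigma (bracket_at e Bh b') B - score e sigma (bracket_at e Bh b') B').
Proof.
have mx : is_match e x.
  apply: contraNN Bx_neq => px.
  by rewrite B_bracket.2.1 // B'_bracket.2.1.
have gain_x : gain (bracket_at e Bh b) x - gain (bracket_at e Bh b') x = 2.
  rewrite /gain !bracket_atE B_bracket.1 B'_bracket.1 !bracket_winner_connect //.
  by rewrite /b /b' [B' x == _]eq_sym (negbTE Bx_neq) !eqxx /=; lra.
rewrite !score_subE -sumrB (bigD1 x) //= -mulrBl gain_x ltr_pwDl //.
  by rewrite mulr_gt0 ?sigma_pos.
apply: sumr_ge0 => z /andP[mz _].
by rewrite -mulrBl mulr_ge0 ?gain_winner_brackets_ge0 ?ltW ?sigma_pos.
Qed.

End Score.

End Reachability.

Unset Implicit Arguments.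
Set Strict Implicit.

Theorem corollary5p14 (V : finType) (e : rel V) (R : realType) (sigma : V -> R)
  (Bh : {ffun V -> V}) :
  is_SET e ->
  (forall x, is_match e x -> (0 < sigma x)%R) ->
  is_bracket e Bh ->
  resolving e sigma [set bracket_at e Bh a | a in [set c | is_player e c]].
Proof.
move=> [_ out1 acyc _] sigma_pos _ B B' hB hB' nBB'.
have functional := out_nbrs_functional out1.
have [x Bx_neq B_below] := exists_minimal_disagreement acyc nBB'.
have gap :=
  winner_brackets_score_gap functional acyc hB hB' Bh Bx_neq B_below sigma_pos.
have mem_player_bracket c : is_player e c -> bracket_at e Bh c \in
    [set bracket_at e Bh a | a in [set c | is_player e c]].
  by move=> pc; apply/imsetP; exists c; rewrite ?inE.
have [eq_b|] := eqVneq (score e sigma (bracket_at e Bh (B x)) B)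
                       (score e sigma (bracket_at e Bh (B x)) B').
  exists (bracket_at e Bh (B' x)); first exact/mem_player_bracket/hB'.1.
  by apply: contraTneq gap => ->; rewrite eq_b !subrr ltxx.
by exists (bracket_at e Bh (B x)); first exact/mem_player_bracket/hB.1.
Qed.
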